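(* Let $S$ be a commutative $\Gamma$-hemiring and let $\mu$ be a fuzzy subset of $S$ such that $\langle x,\mu\rangle=\mu$ for all $x\in S$. Then $\mu$ is constant.
   Context: A $\Gamma$-hemiring is a pair of additive commutative semigroups with zero $S$ and $\Gamma$ with a map $S\times\Gamma\times S\to S$, $(a,\alpha,b)\mapsto a\alpha b$, such that for all $a,b,c\in S$, $\alpha,\beta\in\Gamma$: $(a+b)\alpha c=a\alpha c+b\alpha c$; $a\alpha(b+c)=a\alpha b+a\alpha c$; $a(\alpha+\beta)b=a\alpha b+a\beta b$; $a\alpha(b\beta c)=(a\alpha b)\beta c$; $0\alpha a=0=a\alpha0$; $a0b=0=b0a$. It is commutative if $a\alpha b=b\alpha a$ for all $a,b\in S$, $\alpha\in\Gamma$. A fuzzy subset is a map $\mu:S\to[0,1]$, and its extension by $x\in S$ is $\langle x,\mu\rangle(y)=\inf_{s\in S,\ \alpha,\gamma\in\Gamma}\mu(x\alpha s\gamma y)$. *)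

From HB Require Import structures.
From mathcomp Require Import all_boot all_order all_algebra.
From mathcomp Require Import boolp classical_sets reals.
Set Implicit Arguments. Unset Strict Implicit. Unset Printing Implicit Defensive.
Import Order.TTheory GRing.Theory Num.Theory.
Local Open Scope ring_scope.
Local Open Scope classical_set_scope.

(* S and Gamma are additive commutative semigroups with zero, i.e. nmodType
   (commutative monoids).  The ternary map (a, alpha, b) |-> a alpha b is
   [m a alpha b].  The Gamma-hemiring axioms: *)
Definition is_gamma_hemiring (S G : nmodType) (m : S -> G -> S -> S) : Prop :=
  (forall (a b c : S) (al : G), m (a + b) al c = m a al c + m b al c) /\
      (forall (a b c : S) (al : G), m a al (b + c) = m a al b + m a al c) /\
      (forall (a b : S) (al be : G), m a (al + be) b = m a al b + m a be b) /\
      (forall (a b c : S) (al be : G), m a al (m b be c) = m (m a al b) be c) /\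
      (forall (a : S) (al : G), m 0 al a = 0 /\ m a al 0 = 0) /\
      (forall (a b : S), m a 0 b = 0 /\ m b 0 a = 0).

Definition gamma_commutative (S G : nmodType) (m : S -> G -> S -> S) : Prop :=
  forall (a b : S) (al : G), m a al b = m b al a.

Definition fuzzy_subset (R : realType) (S : Type) (mu : S -> R) : Prop :=
  forall x, 0 <= mu x <= 1.

Definition fuzzy_ext (R : realType) (S G : nmodType) (m : S -> G -> S -> S)
    (x : S) (mu : S -> R) : S -> R :=
  fun y => inf [set r : R | exists (s : S) (al ga : G), r = mu (m (m x al s) ga y)].

From HB Require Import structures.
From mathcomp Require Import all_boot all_order all_algebra.
From mathcomp Require Import boolp classical_sets reals.

(* Since [0 alpha s = 0] and [0 gamma y = 0], every value in the infimum
   defining [<0,mu>(y)] is [mu 0], so [mu y = <0,mu>(y) = mu 0] for all [y]. *)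

Set Implicit Arguments.
Unset Strict Implicit.

Local Open Scope classical_set_scope.

Section ExtensionByZero.
Variables (R : realType) (S G : nmodType) (m : S -> G -> S -> S).
Hypothesis m0l : forall (a : S) (al : G), m 0%R al a = 0%R.

Lemma fuzzy_ext0 (mu : S -> R) (y : S) : fuzzy_ext m 0%R mu y = mu 0%R.
Proof.
rewrite /fuzzy_ext.
suff -> : [set r : R | exists (s : S) (al ga : G), r = mu (m (m 0%R al s) ga y)]
          = [set mu 0%R] by rewrite inf1.
apply/seteqP; split => r /=.
- by move=> [s [al [ga ->]]]; rewrite !m0l.
- by move=> ->; exists 0%R, 0%R, 0%R; rewrite !m0l.
Qed.

Lemma fuzzy_ext0_fixed_const (mu : S -> R) :
  fuzzy_ext m 0%R mu = mu -> forall y z : S, mu y = mu z.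
Proof.
move=> ext0_mu y z.
by rewrite -ext0_mu !fuzzy_ext0.
Qed.

End ExtensionByZero.

Theorem theorem3p24 (R : realType) (S G : nmodType) (m : S -> G -> S -> S)
  (HS : is_gamma_hemiring m) (Hcomm : gamma_commutative m)
  (mu : S -> R) (Hmu : fuzzy_subset mu)
  (Hext : forall x : S, fuzzy_ext m x mu = mu) :
  forall y z : S, mu y = mu z.
Proof.
have [_ [_ [_ [_ [m0 _]]]]] := HS.
have m0l (a : S) (al : G) : m 0%R al a = 0%R by have [] := m0 a al.
exact: (fuzzy_ext0_fixed_const m0l (Hext 0%R)).
Qed.
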